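(* Let $\mathcal{H}$ be a complex separable Hilbert space with orthonormal basis $\{e_n\}_{n=1}^\infty$, and let $W \in \mathcal{B}(\mathcal{H})$ be the unilateral forward weighted shift $W e_n = w_n e_{n+1}$ with bounded weight sequence $(w_n)_n$ satisfying $\inf_n |w_n| > 0$. Then $W$ does not lie in the norm closure of $\mathfrak{c}(\mathrm{nil}_2) := \{MN - NM : M, N \in \mathcal{B}(\mathcal{H}),\ M^2 = 0 = N^2\}$. *)

(* H is modelled as l^2(N; C) with standard
   orthonormal basis e_n = indicator of n (0-indexed). *)
From Stdlib Require Import Reals.
From Coquelicot Require Import Coquelicot.
Open Scope R_scope.

Definition l2 (x : nat -> C) : Prop := ex_series (fun n => (Cmod (x n)) ^ 2).
Definition l2norm (x : nat -> C) : R := sqrt (Series (fun n => (Cmod (x n)) ^ 2)).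

Definition vadd (x y : nat -> C) : nat -> C := fun n => Cplus (x n) (y n).
Definition vsub (x y : nat -> C) : nat -> C := fun n => Cminus (x n) (y n).
Definition vscale (a : C) (x : nat -> C) : nat -> C := fun n => Cmult a (x n).
Definition vzero : nat -> C := fun _ => RtoC 0.

(* An element of B(H): a map defined on all sequences whose restriction to l^2
   is a bounded (complex-)linear operator l^2 -> l^2.  Values off l^2 are
   irrelevant junk. *)
Definition bounded_op (T : (nat -> C) -> (nat -> C)) : Prop :=
  (forall x, l2 x -> l2 (T x)) /\
  (forall (a : C) x y, l2 x -> l2 y ->
     T (vadd (vscale a x) y) = vadd (vscale a (T x)) (T y)) /\
  (exists K : R, forall x, l2 x -> l2norm (T x) <= K * l2norm x).

Definition square_zero (T : (nat -> C) -> (nat -> C)) : Prop :=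
  forall x, l2 x -> T (T x) = vzero.

Definition commutator (M N : (nat -> C) -> (nat -> C)) : (nat -> C) -> (nat -> C) :=
  fun x => vsub (M (N x)) (N (M x)).

Definition in_closure_c_nil2 (A : (nat -> C) -> (nat -> C)) : Prop :=
  forall eps : R, 0 < eps ->
    exists M N : (nat -> C) -> (nat -> C),
      bounded_op M /\ bounded_op N /\ square_zero M /\ square_zero N /\
      (forall x, l2 x -> l2norm (vsub (A x) (commutator M N x)) <= eps * l2norm x).

(* unilateral forward weighted shift W e_n = w_n e_{n+1} (0-indexed) *)
Definition wshift (w : nat -> C) (x : nat -> C) : nat -> C :=
  fun n => match n with O => RtoC 0 | S k => Cmult (w k) (x k) end.

(* Write d = inf |w_n| and let T = MN - NM with M^2 = N^2 = 0 lie within d/2 of W.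
   Since |W x| >= d |x|, T is injective.  Since |W x - e_0|^2 = 1 + |W x|^2, e_0 is not in
   the range of T.  With L the left inverse of the shift, |L (W - T)| <= 1/2, so by the
   contraction principle every y admits x with L (y - T x) = 0, i.e. y - T x is a multiple
   of e_0: the range of T has codimension one.
   On the other hand, with P = M + N and Q = M - N we get T = QP = -PQ and Q^2 = -P^2.
   If P or Q were onto, then so would be P^2 = -Q^2, hence both P and Q, hence T.  So the
   ranges of P and Q, which contain that of T, are equal to it; but Q e_0 = T x + c e_0
   with Q injective forces e_0 into the range of P (c = 0) or of Q (c <> 0). *)

From Stdlib Require Import Reals Lra Lia Classical FunctionalExtensionality.
From Coquelicot Require Import Coquelicot.
Open Scope R_scope.

Definition sqmod (x : nat -> C) (n : nat) : R := Cmod (x n) ^ 2.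

Definition pnorm (x : nat -> C) (N : nat) : R := sqrt (sum_f_R0 (sqmod x) N).

Lemma sqmod_ge0 x n : 0 <= sqmod x n.
Proof. apply pow2_ge_0. Qed.

Lemma sum_sqmod_ge0 x N : 0 <= sum_f_R0 (sqmod x) N.
Proof. apply cond_pos_sum, sqmod_ge0. Qed.

Lemma l2norm_ge0 x : 0 <= l2norm x.
Proof. apply sqrt_pos. Qed.

Lemma sum_sqmod_le_Series x N : l2 x -> sum_f_R0 (sqmod x) N <= Series (sqmod x).
Proof.
  intros Hx. apply sum_incr; [|apply sqmod_ge0].
  apply is_series_Reals, Series_correct, Hx.
Qed.

Lemma l2norm_sq x : l2 x -> l2norm x ^ 2 = Series (sqmod x).
Proof.
  intros Hx. apply pow2_sqrt.
  apply Rle_trans with (1 := sum_sqmod_ge0 x 0), sum_sqmod_le_Series, Hx.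
Qed.

Lemma pnorm_le_l2norm x N : l2 x -> pnorm x N <= l2norm x.
Proof. intros Hx. apply sqrt_le_1_alt, sum_sqmod_le_Series, Hx. Qed.

Lemma l2_of_pnorm_le x r : (forall N, pnorm x N <= r) -> l2 x /\ l2norm x <= r.
Proof.
  intros H.
  assert (Hr : 0 <= r) by (apply Rle_trans with (2 := H 0%nat), sqrt_pos).
  assert (Hsum : forall N, sum_f_R0 (sqmod x) N <= r ^ 2).
  { intros N. rewrite <- (pow2_sqrt _ (sum_sqmod_ge0 x N)).
    apply pow_incr. split; [apply sqrt_pos | apply H]. }
  destruct (growing_cv (fun N => sum_f_R0 (sqmod x) N)) as [l Hl].
  - intros N. simpl. pose proof (sqmod_ge0 x (S N)). lra.
  - exists (r ^ 2). intros s [N ->]. apply Hsum.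
  - assert (Hs : is_series (sqmod x) l) by (apply is_series_Reals, Hl).
    assert (Hx : l2 x) by (exists l; exact Hs).
    split; [exact Hx|].
    rewrite <- (sqrt_pow2 r Hr). apply sqrt_le_1_alt.
    change (Series (sqmod x) <= r ^ 2). rewrite (is_series_unique _ _ Hs).
    refine (Rle_cv_lim Hsum Hl _).
    intros e He. exists 0%nat. intros n _. unfold Rdist. rewrite Rminus_eq_0, Rabs_R0. exact He.
Qed.

Lemma Cmod_le_l2norm x k : l2 x -> Cmod (x k) <= l2norm x.
Proof.
  intros Hx. apply Rle_trans with (2 := pnorm_le_l2norm x k Hx).
  rewrite <- (sqrt_pow2 _ (Cmod_ge_0 (x k))). apply sqrt_le_1_alt.
  destruct k as [|k]; simpl; [unfold sqmod; lra|].
  pose proof (sum_sqmod_ge0 x k). unfold sqmod at 2. lra.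
Qed.

Lemma l2norm_eq0 x : l2 x -> l2norm x = 0 -> x = vzero.
Proof.
  intros Hx H0. apply functional_extensionality. intros k. apply Cmod_eq_0.
  pose proof (Cmod_le_l2norm x k Hx). pose proof (Cmod_ge_0 (x k)). lra.
Qed.

Lemma sqrt_sum_sq_triangle a b c p q r :
  0 <= a -> 0 <= b -> 0 <= c -> 0 <= p -> 0 <= q -> 0 <= r -> c <= a + b -> r <= p + q ->
  sqrt (c ^ 2 + r ^ 2) <= sqrt (a ^ 2 + p ^ 2) + sqrt (b ^ 2 + q ^ 2).
Proof.
  intros Ha Hb Hc Hp Hq Hr Hcab Hrpq.
  set (s := sqrt (a ^ 2 + p ^ 2)). set (t := sqrt (b ^ 2 + q ^ 2)).
  assert (Hs : s ^ 2 = a ^ 2 + p ^ 2) by (apply pow2_sqrt; nra).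
  assert (Ht : t ^ 2 = b ^ 2 + q ^ 2) by (apply pow2_sqrt; nra).
  assert (0 <= s /\ 0 <= t) by (split; apply sqrt_pos).
  (* Cauchy-Schwarz in the plane: [(s t)^2 - (a b + p q)^2 = (a q - p b)^2]. *)
  assert (Hcs : a * b + p * q <= s * t).
  { apply Rsqr_incr_0_var; [unfold Rsqr | nra].
    replace (s * t * (s * t)) with (s ^ 2 * t ^ 2) by ring. rewrite Hs, Ht.
    pose proof (pow2_ge_0 (a * q - p * b)). nra. }
  rewrite <- (sqrt_pow2 (s + t)) by lra. apply sqrt_le_1_alt.
  assert (c ^ 2 <= (a + b) ^ 2) by (apply pow_incr; lra).
  assert (r ^ 2 <= (p + q) ^ 2) by (apply pow_incr; lra).
  nra.
Qed.

Lemma pnorm_triangle x y z N :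
  (forall n, Cmod (z n) <= Cmod (x n) + Cmod (y n)) ->
  pnorm z N <= pnorm x N + pnorm y N.
Proof.
  intros H. unfold pnorm. induction N as [|N IH]; simpl.
  - unfold sqmod. rewrite !sqrt_pow2 by apply Cmod_ge_0. apply H.
  - rewrite <- (pow2_sqrt _ (sum_sqmod_ge0 x N)), <- (pow2_sqrt _ (sum_sqmod_ge0 y N)),
      <- (pow2_sqrt _ (sum_sqmod_ge0 z N)).
    apply sqrt_sum_sq_triangle; auto using sqrt_pos, Cmod_ge_0.
Qed.

Lemma l2_dominated x z k : l2 x -> 0 <= k -> (forall n, Cmod (z n) <= k * Cmod (x n)) ->
  l2 z /\ l2norm z <= k * l2norm x.
Proof.
  intros Hx Hk H.
  assert (Hzx : forall n, 0 <= sqmod z n <= k ^ 2 * sqmod x n).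
  { intros n. split; [apply sqmod_ge0|]. unfold sqmod. rewrite <- Rpow_mult_distr.
    apply pow_incr. split; [apply Cmod_ge_0 | apply H]. }
  assert (Hkx : ex_series (fun n => k ^ 2 * sqmod x n))
    by exact (ex_series_scal_l (k ^ 2) (sqmod x) Hx).
  assert (Hz : l2 z).
  { apply (ex_series_le (sqmod z) (fun n => k ^ 2 * sqmod x n)); [|exact Hkx].
    intros n. rewrite Rabs_pos_eq; apply Hzx. }
  split; [exact Hz|].
  unfold l2norm. rewrite <- (sqrt_pow2 k Hk), <- sqrt_mult_alt by apply pow2_ge_0.
  apply sqrt_le_1_alt. change (Series (sqmod z) <= k ^ 2 * Series (sqmod x)).
  rewrite <- Series_scal_l. apply Series_le; assumption.
Qed.

Lemma l2_triangle x y z : l2 x -> l2 y ->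
  (forall n, Cmod (z n) <= Cmod (x n) + Cmod (y n)) ->
  l2 z /\ l2norm z <= l2norm x + l2norm y.
Proof.
  intros Hx Hy H. apply l2_of_pnorm_le. intros N.
  apply Rle_trans with (1 := pnorm_triangle x y z N H).
  apply Rplus_le_compat; apply pnorm_le_l2norm; assumption.
Qed.

Lemma pnorm_vzero N : pnorm vzero N = 0.
Proof.
  unfold pnorm. rewrite sum_eq_R0; [apply sqrt_0|].
  intros n _. unfold sqmod, vzero. rewrite Cmod_0. ring.
Qed.

Lemma l2_vzero : l2 vzero.
Proof. apply (l2_of_pnorm_le _ 0). intros N. rewrite pnorm_vzero. lra. Qed.

Lemma l2norm_vzero : l2norm vzero = 0.
Proof.
  apply Rle_antisym; [|apply l2norm_ge0].
  apply (l2_of_pnorm_le _ 0). intros N. rewrite pnorm_vzero. lra.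
Qed.

Lemma l2_vadd x y : l2 x -> l2 y -> l2 (vadd x y).
Proof. intros Hx Hy. apply (l2_triangle x y); auto. intros n. apply Cmod_triangle. Qed.

Lemma l2_vscale a x : l2 x -> l2 (vscale a x).
Proof.
  intros Hx. apply (l2_dominated x _ (Cmod a)); [exact Hx | apply Cmod_ge_0 |].
  intros n. unfold vscale. rewrite Cmod_mult. lra.
Qed.

Lemma l2_vsub x y : l2 x -> l2 y -> l2 (vsub x y).
Proof.
  intros Hx Hy. apply (l2_triangle x y); auto. intros n. unfold vsub, Cminus.
  rewrite <- (Cmod_opp (y n)). apply Cmod_triangle.
Qed.

Lemma Cmod_sub_triangle (a b c : C) : Cmod (Cminus a c) <= Cmod (Cminus a b) + Cmod (Cminus b c).
Proof.
  replace (Cminus a c) with (Cplus (Cminus a b) (Cminus b c)) by ring. apply Cmod_triangle.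
Qed.

Lemma l2norm_vsub_sym u v : l2norm (vsub u v) = l2norm (vsub v u).
Proof.
  unfold l2norm. do 2 f_equal. apply functional_extensionality. intros n. unfold vsub.
  replace (Cminus (v n) (u n)) with (Copp (Cminus (u n) (v n))) by ring.
  rewrite Cmod_opp. reflexivity.
Qed.

Lemma l2norm_vsub_triangle u v z : l2 u -> l2 v -> l2 z ->
  l2norm (vsub u z) <= l2norm (vsub u v) + l2norm (vsub v z).
Proof.
  intros Hu Hv Hz. apply l2_triangle; try apply l2_vsub; auto.
  intros n. apply Cmod_sub_triangle.
Qed.

Lemma l2_tail x : l2 x <-> l2 (fun n => x (S n)).
Proof. exact (ex_series_incr_1 (sqmod x)). Qed.

Lemma l2norm_sq_head_tail x : l2 x ->
  l2norm x ^ 2 = Cmod (x 0%nat) ^ 2 + l2norm (fun n => x (S n)) ^ 2.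
Proof.
  intros Hx. rewrite (l2norm_sq x Hx), (l2norm_sq _ (proj1 (l2_tail x) Hx)).
  exact (Series_incr_1 (sqmod x) Hx).
Qed.

Lemma pnorm_le_of_Cmod_le z K N : (forall k, Cmod (z k) <= K) ->
  pnorm z N <= sqrt (INR (S N)) * K.
Proof.
  intros H. assert (HK : 0 <= K) by apply (Rle_trans _ _ _ (Cmod_ge_0 (z 0%nat)) (H 0%nat)).
  unfold pnorm. rewrite <- (sqrt_pow2 K HK). rewrite <- sqrt_mult_alt by apply pos_INR.
  apply sqrt_le_1_alt. rewrite Rmult_comm, <- sum_cte. apply sum_Rle. intros n _.
  apply pow_incr. split; [apply Cmod_ge_0 | apply H].
Qed.

Lemma Lim_seq_dist_le (u c : nat -> R) :
  (forall m m', (m <= m')%nat -> Rabs (u m' - u m) <= c m) -> is_lim_seq c 0 ->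
  forall m, Rabs (Lim_seq u - u m) <= c m.
Proof.
  intros Hu Hc m.
  assert (Hcauchy : ex_finite_lim_seq u).
  { apply ex_lim_seq_cauchy_corr. intros eps.
    destruct (proj2 (is_lim_seq_spec c 0) Hc (pos_div_2 eps)) as [N HN].
    exists N. intros n n' Hn Hn'.
    specialize (HN N (Nat.le_refl N)). simpl in HN. rewrite Rminus_0_r in HN.
    pose proof (Hu N n Hn). pose proof (Hu N n' Hn').
    replace (u n - u n') with ((u n - u N) - (u n' - u N)) by ring.
    apply Rle_lt_trans with (1 := Rabs_triang _ _). rewrite Rabs_Ropp.
    pose proof (Rle_abs (c N)). lra. }
  destruct Hcauchy as [l Hl]. rewrite (is_lim_seq_unique _ _ Hl). simpl.
  assert (Hdist : is_lim_seq (fun m' => Rabs (u m' - u m)) (Rabs (l - u m))).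
  { apply (is_lim_seq_abs _ (l - u m)), is_lim_seq_minus'; [exact Hl | apply is_lim_seq_const]. }
  apply (is_lim_seq_le_loc _ _ _ _ (ex_intro _ m (Hu m)) Hdist (is_lim_seq_const (c m))).
Qed.

Definition Clim (z : nat -> C) : C :=
  (real (Lim_seq (fun m => fst (z m))), real (Lim_seq (fun m => snd (z m)))).

Lemma Clim_dist_le (z : nat -> C) (c : nat -> R) :
  (forall m m', (m <= m')%nat -> Cmod (Cminus (z m') (z m)) <= c m) -> is_lim_seq c 0 ->
  forall m, Cmod (Cminus (Clim z) (z m)) <= sqrt 2 * c m.
Proof.
  intros Hz Hc m. apply Rle_trans with (1 := Cmod_2Rmax _).
  apply Rmult_le_compat_l; [apply sqrt_pos|]. apply Rmax_lub.
  - apply (Lim_seq_dist_le (fun m => fst (z m))); [|exact Hc].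
    intros m0 m' Hm. apply Rle_trans with (2 := Hz m0 m' Hm).
    apply Rle_trans with (2 := Rmax_Cmod _), Rmax_l.
  - apply (Lim_seq_dist_le (fun m => snd (z m))); [|exact Hc].
    intros m0 m' Hm. apply Rle_trans with (2 := Hz m0 m' Hm).
    apply Rle_trans with (2 := Rmax_Cmod _), Rmax_r.
Qed.

Lemma l2_cauchy_limit (xs : nat -> nat -> C) (c : nat -> R) :
  (forall m, l2 (xs m)) ->
  (forall m m', (m <= m')%nat -> l2norm (vsub (xs m') (xs m)) <= c m) ->
  is_lim_seq c 0 ->
  exists x, l2 x /\ forall m, l2norm (vsub x (xs m)) <= c m.
Proof.
  intros Hxs Hcau Hc.
  assert (Hcoord : forall k m m', (m <= m')%nat -> Cmod (Cminus (xs m' k) (xs m k)) <= c m).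
  { intros k m m' Hm. apply Rle_trans with (2 := Hcau m m' Hm).
    apply (Cmod_le_l2norm (vsub (xs m') (xs m))), l2_vsub; apply Hxs. }
  set (x := fun k => Clim (fun m => xs m k)).
  assert (Hx_coord : forall m k, Cmod (Cminus (x k) (xs m k)) <= sqrt 2 * c m)
    by (intros m k; apply (Clim_dist_le (fun m => xs m k)); [apply Hcoord | exact Hc]).
  (* On the first [N + 1] coordinates [x - xs m'] is uniformly bounded by [sqrt 2 * c m'],
     which vanishes as [m'] grows. *)
  assert (Htail : forall m, l2 (vsub x (xs m)) /\ l2norm (vsub x (xs m)) <= c m).
  { intros m. apply l2_of_pnorm_le. intros N.
    set (f := fun m' => sqrt (INR (S N)) * (sqrt 2 * c m') + c m).
    assert (Hf : is_lim_seq f (c m)).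
    { replace (c m) with (sqrt (INR (S N)) * (sqrt 2 * 0) + c m) by ring.
      apply is_lim_seq_plus'; [|apply is_lim_seq_const].
      apply is_lim_seq_mult'; [apply is_lim_seq_const|].
      apply is_lim_seq_mult'; [apply is_lim_seq_const | exact Hc]. }
    refine (is_lim_seq_le_loc (fun _ => pnorm (vsub x (xs m)) N) f _ _ _ (is_lim_seq_const _) Hf).
    exists m. intros m' Hm. unfold f.
    apply Rle_trans with
      (1 := pnorm_triangle _ _ (vsub x (xs m)) N (fun n => Cmod_sub_triangle _ (xs m' n) _)).
    apply Rplus_le_compat.
    - apply pnorm_le_of_Cmod_le. intros k. apply Hx_coord.
    - apply Rle_trans with (2 := Hcau m m' Hm), pnorm_le_l2norm, l2_vsub; apply Hxs. }
  exists x. split; [|intros m; apply Htail].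
  apply (l2_triangle (vsub x (xs 0%nat)) (xs 0%nat)); [apply Htail | apply Hxs |].
  intros n. unfold vsub.
  replace (x n) with (Cplus (Cminus (x n) (xs 0%nat n)) (xs 0%nat n)) at 1 by ring.
  apply Cmod_triangle.
Qed.

Definition maps_l2 (F : (nat -> C) -> nat -> C) : Prop := forall x, l2 x -> l2 (F x).

Definition linear_l2 (F : (nat -> C) -> nat -> C) : Prop :=
  forall a x y, l2 x -> l2 y -> F (vadd (vscale a x) y) = vadd (vscale a (F x)) (F y).

Ltac vring := apply functional_extensionality; intro; unfold vadd, vsub, vscale, vzero; ring.

Lemma vsub_eq0 x y : vsub x y = vzero -> x = y.
Proof.
  intros E. apply functional_extensionality. intros n.
  apply (f_equal (fun f => f n)) in E. unfold vsub, vzero in E.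
  replace (x n) with (Cplus (Cminus (x n) (y n)) (y n)) by ring. rewrite E. ring.
Qed.

Lemma l2_contraction_fixpoint (F : (nat -> C) -> nat -> C) (k : R) :
  0 <= k < 1 -> maps_l2 F ->
  (forall u v, l2 u -> l2 v -> l2norm (vsub (F u) (F v)) <= k * l2norm (vsub u v)) ->
  exists x, l2 x /\ F x = x.
Proof.
  intros Hk HF Hcontr.
  set (xs := fun m => Nat.iter m F vzero).
  assert (Hxs : forall m, l2 (xs m)) by (induction m; [apply l2_vzero | apply HF, IHm]).
  set (a := l2norm (vsub (xs 1%nat) (xs 0%nat))).
  assert (Hstep : forall m, l2norm (vsub (xs (S m)) (xs m)) <= a * k ^ m).
  { induction m as [|m IH]; [rewrite pow_O, Rmult_1_r; apply Rle_refl|].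
    apply Rle_trans with (1 := Hcontr _ _ (Hxs (S m)) (Hxs m)). simpl pow.
    rewrite <- Rmult_assoc, (Rmult_comm a k), Rmult_assoc.
    apply Rmult_le_compat_l; [lra | exact IH]. }
  assert (Hcau : forall m j,
    l2norm (vsub (xs (j + m)%nat) (xs m)) <= a * (k ^ m - k ^ (j + m)) / (1 - k)).
  { intros m j. induction j as [|j IH].
    - rewrite Nat.add_0_l. replace (vsub (xs m) (xs m)) with vzero by vring.
      rewrite l2norm_vzero. unfold Rdiv. rewrite Rminus_eq_0. lra.
    - apply Rle_trans with (1 := l2norm_vsub_triangle _ (xs (j + m)%nat) _ (Hxs _) (Hxs _) (Hxs _)).
      apply Rle_trans with (1 := Rplus_le_compat _ _ _ _ (Hstep (j + m)%nat) IH).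
      apply Req_le. simpl pow. field. lra. }
  set (c := fun m => a * k ^ m / (1 - k)).
  assert (Hc0 : is_lim_seq c 0).
  { replace 0 with (a * 0 / (1 - k)) by (field; lra).
    apply is_lim_seq_mult'; [|apply is_lim_seq_const].
    apply is_lim_seq_mult'; [apply is_lim_seq_const|].
    apply is_lim_seq_geom. rewrite Rabs_pos_eq; lra. }
  destruct (l2_cauchy_limit xs c Hxs) as [x [Hx Hxc]]; [| exact Hc0 |].
  { intros m m' Hm. replace m' with ((m' - m) + m)%nat by lia.
    apply Rle_trans with (1 := Hcau m (m' - m)%nat). unfold c, Rdiv.
    apply Rmult_le_compat_r; [apply Rlt_le, Rinv_0_lt_compat; lra|].
    apply Rmult_le_compat_l; [apply l2norm_ge0|].
    pose proof (pow_le k (m' - m + m) (proj1 Hk)). lra. }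
  exists x. split; [exact Hx|].
  (* [|F x - x|] is at most [k c_m + c_(m+1)] for every [m], and this tends to [0]. *)
  apply vsub_eq0, l2norm_eq0, Rle_antisym; [apply l2_vsub; auto | | apply l2norm_ge0].
  assert (Hlim : is_lim_seq (fun m => k * c m + c (S m)) 0).
  { replace 0 with (k * 0 + 0) by ring.
    apply is_lim_seq_plus'; [apply is_lim_seq_mult'; [apply is_lim_seq_const | exact Hc0]|].
    apply (is_lim_seq_incr_1 c 0), Hc0. }
  refine (is_lim_seq_le_loc (fun _ => l2norm (vsub (F x) x)) _ _ _ _ (is_lim_seq_const _) Hlim).
  exists 0%nat. intros m _.
  apply Rle_trans with (1 := l2norm_vsub_triangle _ (xs (S m)) _ (HF x Hx) (Hxs _) Hx).
  apply Rplus_le_compat.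
  - apply Rle_trans with (1 := Hcontr x (xs m) Hx (Hxs m)).
    apply Rmult_le_compat_l; [lra | apply Hxc].
  - rewrite l2norm_vsub_sym. apply Hxc.
Qed.

Section LinearMaps.

Variable F : (nat -> C) -> nat -> C.
Hypothesis HF : linear_l2 F.

Lemma linear_l2_vzero : F vzero = vzero.
Proof.
  pose proof (HF (RtoC 1) vzero vzero l2_vzero l2_vzero) as E.
  replace (vadd (vscale (RtoC 1) vzero) vzero) with vzero in E by vring.
  apply functional_extensionality. intros n. apply (f_equal (fun f => f n)) in E.
  unfold vadd, vscale, vzero in *. set (z := F (fun _ => RtoC 0) n) in *.
  assert (Hz : z = Cminus (Cplus (Cmult (RtoC 1) z) z) z) by ring.
  rewrite <- E in Hz. rewrite Hz. ring.
Qed.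

Lemma linear_l2_vscale a x : l2 x -> F (vscale a x) = vscale a (F x).
Proof.
  intros Hx. replace (vscale a x) with (vadd (vscale a x) vzero) by vring.
  rewrite HF, linear_l2_vzero by (apply l2_vzero || exact Hx). vring.
Qed.

Lemma linear_l2_vadd x y : l2 x -> l2 y -> F (vadd x y) = vadd (F x) (F y).
Proof.
  intros Hx Hy. replace (vadd x y) with (vadd (vscale (RtoC 1) x) y) by vring.
  rewrite HF by assumption. vring.
Qed.

Lemma linear_l2_vsub x y : l2 x -> l2 y -> F (vsub x y) = vsub (F x) (F y).
Proof.
  intros Hx Hy. replace (vsub x y) with (vadd (vscale (RtoC (-1)) y) x) by vring.
  rewrite HF by assumption. vring.
Qed.

End LinearMaps.

Definition onto_l2 (F : (nat -> C) -> nat -> C) : Prop :=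
  forall y, l2 y -> exists x, l2 x /\ F x = y.

Section SquareZeroCommutator.

Variables M N : (nat -> C) -> nat -> C.
Hypotheses (HM : maps_l2 M) (HN : maps_l2 N) (HMlin : linear_l2 M) (HNlin : linear_l2 N)
  (HM2 : square_zero M) (HN2 : square_zero N).

Let P x := vadd (M x) (N x).
Let Q x := vsub (M x) (N x).

Let T := commutator M N.

Lemma maps_l2_P : maps_l2 P.
Proof. intros x Hx. apply l2_vadd; auto. Qed.

Lemma maps_l2_Q : maps_l2 Q.
Proof. intros x Hx. apply l2_vsub; auto. Qed.

Lemma maps_l2_commutator : maps_l2 T.
Proof. intros x Hx. apply l2_vsub; auto. Qed.

Lemma linear_l2_P : linear_l2 P.
Proof. intros a x y Hx Hy. unfold P. rewrite HMlin, HNlin by assumption. vring. Qed.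

Lemma linear_l2_Q : linear_l2 Q.
Proof. intros a x y Hx Hy. unfold Q. rewrite HMlin, HNlin by assumption. vring. Qed.

Lemma linear_l2_commutator : linear_l2 T.
Proof.
  intros a x y Hx Hy. unfold T, commutator.
  rewrite (HNlin a x y), (HMlin a x y), (HMlin a (N x)), (HNlin a (M x)) by auto. vring.
Qed.

Lemma commutator_eq_QP x : l2 x -> T x = Q (P x).
Proof.
  intros Hx. unfold T, commutator, Q, P.
  rewrite (linear_l2_vadd M), (linear_l2_vadd N), HM2, HN2 by auto. vring.
Qed.

Lemma PQ_opp_commutator x : l2 x -> P (Q x) = vscale (RtoC (-1)) (T x).
Proof.
  intros Hx. unfold T, commutator, Q, P.
  rewrite (linear_l2_vsub M), (linear_l2_vsub N), HM2, HN2 by auto. vring.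
Qed.

Lemma QQ_opp_PP x : l2 x -> Q (Q x) = vscale (RtoC (-1)) (P (P x)).
Proof.
  intros Hx. unfold Q, P.
  rewrite (linear_l2_vsub M), (linear_l2_vsub N), (linear_l2_vadd M), (linear_l2_vadd N), HM2, HN2
    by auto.
  vring.
Qed.

Lemma onto_l2_P_commutator : onto_l2 P -> onto_l2 T.
Proof.
  intros HP y Hy.
  destruct (HP _ (l2_vscale (RtoC (-1)) y Hy)) as (z1 & Hz1 & E1).
  destruct (HP _ Hz1) as (z2 & Hz2 & E2).
  destruct (HP _ (maps_l2_Q z2 Hz2)) as (x & Hx & E3).
  exists x. split; [exact Hx|].
  rewrite commutator_eq_QP, E3, QQ_opp_PP, E2, E1 by assumption. vring.
Qed.

Lemma onto_l2_Q_commutator : onto_l2 Q -> onto_l2 T.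
Proof.
  intros HQ y Hy.
  destruct (HQ _ (l2_vscale (RtoC (-1)) y Hy)) as (z1 & Hz1 & E1).
  destruct (HQ _ Hz1) as (z2 & Hz2 & E2).
  destruct (HQ _ (maps_l2_P z2 Hz2)) as (x & Hx & E3).
  exists (vscale (RtoC (-1)) x). split; [apply l2_vscale, Hx|].
  rewrite (linear_l2_vscale T linear_l2_commutator) by assumption.
  rewrite <- (PQ_opp_commutator x Hx), E3.
  replace (P (P z2)) with (vscale (RtoC (-1)) (Q (Q z2))).
  - rewrite E2, E1. vring.
  - rewrite QQ_opp_PP by assumption. vring.
Qed.

Variable v : nat -> C.
Hypotheses (Hv : l2 v)
  (HTinj : forall x, l2 x -> T x = vzero -> x = vzero)
  (HTv : forall x, l2 x -> T x <> v)
  (HTcodim : forall y, l2 y -> exists x c, l2 x /\ y = vadd (T x) (vscale c v)).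

Lemma commutator_not_onto_l2 : ~ onto_l2 T.
Proof. intros HT. destruct (HT v Hv) as (x & Hx & E). exact (HTv x Hx E). Qed.

Lemma Q_injective u u' : l2 u -> l2 u' -> Q u = Q u' -> u = u'.
Proof.
  intros Hu Hu' E. apply vsub_eq0, HTinj; [apply l2_vsub; assumption|].
  rewrite (linear_l2_vsub T linear_l2_commutator) by assumption.
  assert (ET : forall z, l2 z -> T z = vscale (RtoC (-1)) (P (Q z)))
    by (intros z Hz; rewrite PQ_opp_commutator by exact Hz; vring).
  rewrite (ET u Hu), (ET u' Hu'), E. vring.
Qed.

Lemma P_misses_v a : l2 a -> P a <> v.
Proof.
  intros Ha Pa. apply commutator_not_onto_l2, onto_l2_P_commutator. intros y Hy.
  destruct (HTcodim y Hy) as (x & c & Hx & ->).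
  exists (vsub (vscale c a) (Q x)).
  split; [apply l2_vsub; [apply l2_vscale | apply maps_l2_Q]; assumption|].
  rewrite (linear_l2_vsub P linear_l2_P), (linear_l2_vscale P linear_l2_P),
    PQ_opp_commutator, Pa by (try apply l2_vscale; try apply maps_l2_Q; assumption).
  vring.
Qed.

Lemma Q_misses_v b : l2 b -> Q b <> v.
Proof.
  intros Hb Qb. apply commutator_not_onto_l2, onto_l2_Q_commutator. intros y Hy.
  destruct (HTcodim y Hy) as (x & c & Hx & ->).
  exists (vadd (vscale c b) (P x)).
  split; [apply l2_vadd; [apply l2_vscale | apply maps_l2_P]; assumption|].
  rewrite linear_l2_Q, commutator_eq_QP, Qb by (try apply maps_l2_P; assumption).
  vring.
Qed.

Lemma commutator_square_zero_not_codim_one : False.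
Proof.
  destruct (HTcodim (Q v) (maps_l2_Q v Hv)) as (x & c & Hx & E).
  rewrite commutator_eq_QP in E by exact Hx.
  destruct (classic (c = RtoC 0)) as [-> | Hc].
  - apply (P_misses_v x Hx). symmetry. apply Q_injective; [exact Hv | apply maps_l2_P, Hx |].
    rewrite E. vring.
  - apply (Q_misses_v (vscale (Cinv c) (vsub v (P x)))).
    + apply l2_vscale, l2_vsub; [exact Hv | apply maps_l2_P, Hx].
    + rewrite (linear_l2_vscale Q linear_l2_Q), (linear_l2_vsub Q linear_l2_Q), E
        by (try apply l2_vsub; try apply maps_l2_P; assumption).
      apply functional_extensionality. intros n. unfold vadd, vsub, vscale.
      field. exact Hc.
Qed.

End SquareZeroCommutator.

Definition e0 : nat -> C := fun n => match n with O => RtoC 1 | S _ => RtoC 0 end.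

Lemma l2_e0 : l2 e0.
Proof. apply l2_tail, l2_vzero. Qed.

Definition vmul (w x : nat -> C) : nat -> C := fun n => Cmult (w n) (x n).

Definition wshift_linv (w y : nat -> C) : nat -> C := fun n => Cdiv (y (S n)) (w n).

Section WeightedShift.

Variables (w : nat -> C) (B d : R).
Hypotheses (HB : forall n, Cmod (w n) <= B) (Hd : 0 < d) (Hdw : forall n, d <= Cmod (w n)).

Lemma weight_neq0 n : w n <> RtoC 0.
Proof. apply Cmod_gt_0. specialize (Hdw n). lra. Qed.

Lemma l2_vmul x : l2 x -> l2 (vmul w x).
Proof.
  intros Hx. apply (l2_dominated x _ B Hx).
  - apply (Rle_trans _ _ _ (Cmod_ge_0 (w 0%nat)) (HB 0%nat)).
  - intros n. unfold vmul. rewrite Cmod_mult.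
    apply Rmult_le_compat_r; [apply Cmod_ge_0 | apply HB].
Qed.

Lemma l2norm_vmul_ge x : l2 x -> d * l2norm x <= l2norm (vmul w x).
Proof.
  intros Hx.
  destruct (l2_dominated (vmul w x) x (/ d) (l2_vmul x Hx)) as [_ H].
  - apply Rlt_le, Rinv_0_lt_compat, Hd.
  - intros n. unfold vmul. rewrite Cmod_mult.
    apply (Rmult_le_reg_l d); [exact Hd|]. rewrite <- Rmult_assoc, Rinv_r, Rmult_1_l by lra.
    apply Rmult_le_compat_r; [apply Cmod_ge_0 | apply Hdw].
  - apply (Rmult_le_compat_l d) in H; [|lra].
    rewrite <- Rmult_assoc, Rinv_r, Rmult_1_l in H by lra. exact H.
Qed.

Lemma l2norm_wshift x : l2 x ->
  l2 (wshift w x) /\ l2norm (wshift w x) = l2norm (vmul w x).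
Proof.
  intros Hx. assert (HW : l2 (wshift w x)) by apply l2_tail, l2_vmul, Hx.
  split; [exact HW|].
  rewrite <- (sqrt_pow2 _ (l2norm_ge0 (wshift w x))), l2norm_sq_head_tail by exact HW.
  simpl wshift at 1. rewrite Cmod_0. unfold pow at 1. rewrite Rmult_0_l, Rplus_0_l.
  apply sqrt_pow2, l2norm_ge0.
Qed.

Lemma l2_wshift_linv y :
  l2 y -> l2 (wshift_linv w y) /\ l2norm (wshift_linv w y) <= / d * l2norm y.
Proof.
  intros Hy. assert (Htail : l2 (fun n => y (S n))) by exact (proj1 (l2_tail y) Hy).
  destruct (l2_dominated _ (wshift_linv w y) (/ d) Htail) as [HL HLn].
  - apply Rlt_le, Rinv_0_lt_compat, Hd.
  - intros n. unfold wshift_linv. rewrite Cmod_div by apply weight_neq0.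
    unfold Rdiv. rewrite Rmult_comm. apply Rmult_le_compat_r; [apply Cmod_ge_0|].
    apply Rinv_le_contravar; [exact Hd | apply Hdw].
  - split; [exact HL|]. apply Rle_trans with (1 := HLn).
    apply Rmult_le_compat_l; [apply Rlt_le, Rinv_0_lt_compat, Hd|].
    rewrite <- (sqrt_pow2 _ (l2norm_ge0 y)), <- (sqrt_pow2 _ (l2norm_ge0 (fun n => y (S n)))).
    apply sqrt_le_1_alt. rewrite (l2norm_sq_head_tail y Hy).
    pose proof (pow2_ge_0 (Cmod (y 0%nat))). lra.
Qed.

Section Perturbation.

Variables (T : (nat -> C) -> nat -> C) (eps : R).
Hypotheses (HT : maps_l2 T) (HTlin : linear_l2 T) (Heps : 0 <= eps < d)
  (HWT : forall x, l2 x -> l2norm (vsub (wshift w x) (T x)) <= eps * l2norm x).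

Lemma perturbation_injective x : l2 x -> T x = vzero -> x = vzero.
Proof.
  intros Hx Tx. apply (l2norm_eq0 x Hx), Rle_antisym; [|apply l2norm_ge0].
  pose proof (HWT x Hx) as H. rewrite Tx in H.
  replace (vsub (wshift w x) vzero) with (wshift w x) in H by vring.
  destruct (l2norm_wshift x Hx) as [_ E]. rewrite E in H.
  pose proof (l2norm_vmul_ge x Hx). pose proof (l2norm_ge0 x). nra.
Qed.

Lemma perturbation_misses_e0 x : l2 x -> T x <> e0.
Proof.
  intros Hx Tx. pose proof (HWT x Hx) as H. rewrite Tx in H.
  destruct (l2norm_wshift x Hx) as [HW _].
  assert (Hz : l2 (vsub (wshift w x) e0)).
  { apply l2_vsub; [exact HW | exact l2_e0]. }
  assert (Htail : (fun n => vsub (wshift w x) e0 (S n)) = vmul w x).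
  { apply functional_extensionality. intros n. unfold vsub, wshift, e0, vmul. ring. }
  pose proof (l2norm_sq_head_tail _ Hz) as E. rewrite Htail in E.
  replace (vsub (wshift w x) e0 0%nat) with (Copp (RtoC 1)) in E
    by (unfold vsub, wshift, e0; ring).
  rewrite Cmod_opp, Cmod_1 in E.
  pose proof (l2norm_vmul_ge x Hx). pose proof (l2norm_ge0 x).
  pose proof (l2norm_ge0 (vsub (wshift w x) e0)).
  assert (eps * l2norm x <= d * l2norm x) by nra.
  nra.
Qed.

Lemma perturbation_codim_one y : l2 y -> exists x c, l2 x /\ y = vadd (T x) (vscale c e0).
Proof.
  intros Hy.
  (* With [L] the left inverse of the shift, [F v - v = L (y - T v)] and
     [F u - F v = L ((W - T) (u - v))]. *)
  set (F := fun v => vadd v (wshift_linv w (vsub y (T v)))).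
  assert (HF : maps_l2 F).
  { intros v Hv. apply l2_vadd; [exact Hv|]. apply l2_wshift_linv, l2_vsub; auto. }
  assert (HFcontr : forall u v, l2 u -> l2 v ->
    l2norm (vsub (F u) (F v)) <= / d * eps * l2norm (vsub u v)).
  { intros u v Hu Hv. assert (Huv : l2 (vsub u v)) by (apply l2_vsub; assumption).
    replace (vsub (F u) (F v)) with (wshift_linv w (vsub (wshift w (vsub u v)) (T (vsub u v)))).
    - assert (HWTuv : l2 (vsub (wshift w (vsub u v)) (T (vsub u v))))
        by exact (l2_vsub _ _ (proj1 (l2norm_wshift _ Huv)) (HT _ Huv)).
      apply Rle_trans with (1 := proj2 (l2_wshift_linv _ HWTuv)).
      rewrite Rmult_assoc. apply Rmult_le_compat_l; [apply Rlt_le, Rinv_0_lt_compat, Hd|].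
      apply HWT, Huv.
    - rewrite (linear_l2_vsub T HTlin) by assumption.
      apply functional_extensionality. intros n. unfold F, wshift_linv, vadd, vsub, wshift.
      field. apply weight_neq0. }
  destruct (l2_contraction_fixpoint F (/ d * eps)) as (x & Hx & Fx);
    [| exact HF | exact HFcontr |].
  { split; [apply Rmult_le_pos; [apply Rlt_le, Rinv_0_lt_compat|]; lra|].
    apply (Rmult_lt_reg_l d); [exact Hd|]. rewrite <- Rmult_assoc, Rinv_r, Rmult_1_l; lra. }
  exists x, (Cminus (y 0%nat) (T x 0%nat)). split; [exact Hx|].
  apply functional_extensionality. intros [|n]; unfold vadd, vscale, e0; [ring|].
  apply (f_equal (fun f => f n)) in Fx. unfold F, vadd, wshift_linv, vsub in Fx.
  assert (E : Cminus (y (S n)) (T x (S n)) = RtoC 0).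
  { replace (Cminus (y (S n)) (T x (S n)))
      with (Cmult (w n) (Cminus (Cplus (x n) (Cdiv (Cminus (y (S n)) (T x (S n))) (w n))) (x n)))
      by (field; apply weight_neq0).
    rewrite Fx. ring. }
  replace (y (S n)) with (Cplus (Cminus (y (S n)) (T x (S n))) (T x (S n))) by ring.
  rewrite E. ring.
Qed.

End Perturbation.

End WeightedShift.

Theorem proposition4p20 (w : nat -> C)
  (Hbdd : exists B : R, forall n, Cmod (w n) <= B)
  (Hinf : exists d : R, 0 < d /\ forall n, d <= Cmod (w n)) :
  ~ in_closure_c_nil2 (wshift w).
Proof.
  intros Hclosure. destruct Hbdd as [B HB]. destruct Hinf as (d & Hd & Hdw).
  destruct (Hclosure (d / 2) ltac:(lra))
    as (M & N & (HM & HMlin & _) & (HN & HNlin & _) & HM2 & HN2 & Hnear).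
  assert (Heps : 0 <= d / 2 < d) by lra.
  apply (commutator_square_zero_not_codim_one M N HM HN HMlin HNlin HM2 HN2 e0 l2_e0).
  - exact (perturbation_injective w B d HB Hd Hdw _ _ Heps Hnear).
  - exact (perturbation_misses_e0 w B d HB Hd Hdw _ _ Heps Hnear).
  - exact (perturbation_codim_one w B d HB Hd Hdw _ _ (maps_l2_commutator M N HM HN)
             (linear_l2_commutator M N HM HN HMlin HNlin) Heps Hnear).
Qed.
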